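(* For every real $\gamma<1$ there exists an infinite binary sequence $\omega$ and an integer $N$ such that every substring $\omega_i\omega_{i+1}\ldots\omega_{i+n-1}$ of $\omega$ of length $n\ge N$ satisfies $K(\omega_i\ldots\omega_{i+n-1})\ge \gamma n$.
   Context: $K$ denotes prefix Kolmogorov complexity. *)

(* Prefix Kolmogorov complexity, defined from scratch:
   computability = Kleene's mu-recursive functions (big-step semantics),
   binary strings = list bool, encoded bijectively into nat. *)
From Stdlib Require Import Reals List Arith.
Import ListNotations.

Inductive prf : Type :=
| PZero : prf
| PSucc : prf
| PProj : nat -> prf
| PComp : prf -> list prf -> prf
| PRec  : prf -> prf -> prf
| PMu   : prf -> prf.

Inductive eval : prf -> list nat -> nat -> Prop :=
| eZero v : eval PZero v 0
| eSucc x v : eval PSucc (x :: v) (S x)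
| eProj i v : i < length v -> eval (PProj i) v (nth i v 0)
| eComp f gs v ws y : evals gs v ws -> eval f ws y -> eval (PComp f gs) v y
| eRec0 f g v y : eval f v y -> eval (PRec f g) (0 :: v) y
| eRecS f g n v r y :
    eval (PRec f g) (n :: v) r -> eval g (n :: r :: v) y ->
    eval (PRec f g) (S n :: v) y
| eMu f v n :
    eval f (n :: v) 0 ->
    (forall m, m < n -> exists k, eval f (m :: v) (S k)) ->
    eval (PMu f) v n
with evals : list prf -> list nat -> list nat -> Prop :=
| esNil v : evals [] v []
| esCons g gs v w ws : eval g v w -> evals gs v ws -> evals (g :: gs) v (w :: ws).

(* Bijective encoding of binary strings into nat. *)
Fixpoint code (s : list bool) : nat :=
  match s with
  | [] => 0
  | b :: s' => 2 * code s' + (if b then 2 else 1)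
  end.

Definition machine := list bool -> list bool -> Prop.

Definition computable (M : machine) : Prop :=
  exists f : prf, forall p x, M p x <-> eval f [code p] (code x).

Definition is_prefix (p q : list bool) : Prop := exists r, q = p ++ r.

Definition prefix_free (M : machine) : Prop :=
  forall p q x y, M p x -> M q y -> is_prefix p q -> p = q.

Definition prefix_machine (M : machine) : Prop := computable M /\ prefix_free M.

Definition optimal_prefix_machine (U : machine) : Prop :=
  prefix_machine U /\
  forall M, prefix_machine M ->
    exists c : nat, forall p x, M p x ->
      exists q, U q x /\ length q <= length p + c.

Definition is_K (U : machine) (x : list bool) (k : nat) : Prop :=
  (exists p, U p x /\ length p = k) /\ (forall p, U p x -> k <= length p).

Definition substring (omega : nat -> bool) (i n : nat) : list bool :=
  map (fun k => omega (i + k)) (seq 0 n).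

From Stdlib Require Import Reals List Arith Lia Lra ClassicalEpsilon.
Import ListNotations.

(* Fix gamma <= g < 1 and call a word compressible if its length is at least N and it has
   a U-program shorter than g times its length. As U is functional, there are at most
   2 * 2 ^ (g j) compressible words of length j. A counting argument shows that whenever
   the numbers c_j of forbidden words satisfy sum_j c_j beta ^ j <= 2 beta - 1 for some
   beta > 0, the numbers of words of each length with no forbidden factor satisfy
   s_(n+1) >= s_n / beta, hence stay positive; for N large enough this holds with the
   compressible words forbidden. Koenig's lemma then gives an infinite sequence without
   compressible factors. *)

Section PrfNestedInd.
Variable P : prf -> Prop.
Hypotheses (P_zero : P PZero) (P_succ : P PSucc) (P_proj : forall i, P (PProj i))
  (P_comp : forall f gs, P f -> Forall P gs -> P (PComp f gs))
  (P_rec : forall f g, P f -> P g -> P (PRec f g))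
  (P_mu : forall f, P f -> P (PMu f)).

Fixpoint prf_nested_ind (f : prf) : P f :=
  match f with
  | PZero => P_zero
  | PSucc => P_succ
  | PProj i => P_proj i
  | PComp f gs => P_comp f gs (prf_nested_ind f)
      ((fix all (l : list prf) : Forall P l :=
         match l with
         | [] => Forall_nil _
         | g :: l => Forall_cons _ (prf_nested_ind g) (all l)
         end) gs)
  | PRec f g => P_rec f g (prf_nested_ind f) (prf_nested_ind g)
  | PMu f => P_mu f (prf_nested_ind f)
  end.
End PrfNestedInd.

Definition deterministic (f : prf) : Prop :=
  forall v y y', eval f v y -> eval f v y' -> y = y'.

Lemma evals_deterministic gs : Forall deterministic gs ->
  forall v ws ws', evals gs v ws -> evals gs v ws' -> ws = ws'.
Proof.
  induction 1 as [|g gs Hg _ IH]; intros v ws ws' H1 H2.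
  - inversion H1; inversion H2; reflexivity.
  - inversion H1; subst; inversion H2; subst.
    f_equal; [eapply Hg | eapply IH]; eauto.
Qed.

Lemma eval_deterministic f : deterministic f.
Proof.
  induction f using prf_nested_ind; unfold deterministic in *.
  - intros v y y' H1 H2; inversion H1; inversion H2; subst; reflexivity.
  - intros v y y' H1 H2; inversion H1; inversion H2; subst; congruence.
  - intros v y y' H1 H2; inversion H1; inversion H2; subst; reflexivity.
  - intros v y y' H1 H2; inversion H1; subst; inversion H2; subst.
    assert (ws = ws0) as -> by (eapply evals_deterministic; eauto).
    eapply IHf; eauto.
  - intros [|n v]; [intros y y' H1; inversion H1|].
    induction n as [|n IHn]; intros y y' H1 H2; inversion H1; subst; inversion H2; subst.
    + eapply IHf1; eauto.
    + assert (r = r0) as -> by (eapply IHn; eauto). eapply IHf2; eauto.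
  - intros v y y' H1 H2; inversion H1 as [| | | | | |? ? ? Hy Hlt]; subst.
    inversion H2 as [| | | | | |? ? ? Hy' Hlt']; subst.
    destruct (lt_eq_lt_dec y y') as [[Hl|He]|Hl]; auto.
    + destruct (Hlt' y Hl) as [k Hk]. specialize (IHf _ _ _ Hy Hk). discriminate.
    + destruct (Hlt y' Hl) as [k Hk]. specialize (IHf _ _ _ Hy' Hk). discriminate.
Qed.

Lemma code_inj s t : code s = code t -> s = t.
Proof.
  revert t; induction s as [|a s IH]; intros [|b t]; simpl; intros H; auto.
  - destruct b; lia.
  - destruct a; lia.
  - destruct a, b; try lia; f_equal; apply IH; lia.
Qed.

Lemma computable_functional (M : machine) :
  computable M -> forall p x y, M p x -> M p y -> x = y.
Proof.
  intros [f Hf] p x y H1 H2. apply Hf in H1, H2.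
  apply code_inj, (eval_deterministic f _ _ _ H1 H2).
Qed.

Definition avoids (F : list bool -> Prop) (x : list bool) : Prop :=
  forall a b c, x = a ++ b ++ c -> ~ F b.

Lemma avoids_prefix F x y : avoids F (x ++ y) -> avoids F x.
Proof. intros H a b c ->. apply (H a b (c ++ y)). rewrite !app_assoc. reflexivity. Qed.

Section Konig.
Variable F : list bool -> Prop.
Hypothesis avoiding_words : forall n, exists x, length x = n /\ avoids F x.

Definition extendable (x : list bool) : Prop :=
  forall m, exists z, length z = m /\ avoids F (x ++ z).

Lemma extendable_snoc x :
  extendable x -> extendable (x ++ [false]) \/ extendable (x ++ [true]).
Proof.
  intros Hx. apply NNPP; intros Hn.
  apply not_or_and in Hn as [H0 H1].
  apply not_all_ex_not in H0 as [m0 H0]. apply not_all_ex_not in H1 as [m1 H1].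
  destruct (Hx (S (Nat.max m0 m1))) as [[|b z] [Hz Az]]; [discriminate|].
  simpl in Hz.
  assert (Hb : forall m, m <= length z -> avoids F ((x ++ [b]) ++ firstn m z)).
  { intros m _. apply (avoids_prefix _ _ (skipn m z)).
    rewrite <- !app_assoc, firstn_skipn. exact Az. }
  destruct b; [apply H1; exists (firstn m1 z) | apply H0; exists (firstn m0 z)];
    (split; [rewrite length_firstn; lia | apply Hb; lia]).
Qed.

Fixpoint branch (n : nat) : list bool :=
  match n with
  | O => []
  | S n => branch n ++
      [if excluded_middle_informative (extendable (branch n ++ [true])) then true else false]
  end.

Lemma branch_spec n : extendable (branch n) /\ length (branch n) = n.
Proof.
  induction n as [|n [IH1 IH2]].
  - split; [|reflexivity]. intros m. destruct (avoiding_words m) as [x Hx]. exists x; exact Hx.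
  - simpl. split; [|rewrite length_app, IH2; simpl; lia].
    destruct excluded_middle_informative as [H|H]; auto.
    destruct (extendable_snoc _ IH1); tauto.
Qed.

Definition branch_limit (k : nat) : bool := nth k (branch (S k)) false.

Lemma branch_S n : branch (S n) = branch n ++ [branch_limit n].
Proof.
  unfold branch_limit. cbn [branch].
  rewrite app_nth2 by (rewrite (proj2 (branch_spec n)); lia).
  rewrite (proj2 (branch_spec n)), Nat.sub_diag. reflexivity.
Qed.

Lemma branch_add i n : branch (i + n) = branch i ++ substring branch_limit i n.
Proof.
  induction n as [|n IH].
  - rewrite Nat.add_0_r, app_nil_r. reflexivity.
  - rewrite Nat.add_succ_r, branch_S, IH. unfold substring.
    rewrite seq_S, map_app, app_assoc. reflexivity.
Qed.

Lemma avoiding_sequence : exists omega, forall i n, ~ F (substring omega i n).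
Proof.
  exists branch_limit. intros i n.
  destruct (proj1 (branch_spec (i + n)) 0) as [[|? ?] [Hz Az]]; [|discriminate Hz].
  apply (Az (branch i) _ []). rewrite branch_add, !app_nil_r. reflexivity.
Qed.

End Konig.

Open Scope R_scope.

Fixpoint sum_nat (m : nat) (h : nat -> R) : R :=
  match m with O => 0 | S m => sum_nat m h + h m end.

Lemma sum_nat_le m h h' :
  (forall j, (j < m)%nat -> h j <= h' j) -> sum_nat m h <= sum_nat m h'.
Proof. induction m; simpl; intros H; [lra|]. apply Rplus_le_compat; auto. Qed.

Lemma sum_nat_ext m h h' :
  (forall j, (j < m)%nat -> h j = h' j) -> sum_nat m h = sum_nat m h'.
Proof. intros H; apply Rle_antisym; apply sum_nat_le; intros j Hj; rewrite H; auto; lra. Qed.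

Lemma sum_nat_scal m k h : sum_nat m (fun j => k * h j) = k * sum_nat m h.
Proof. induction m; simpl; [ring|]. rewrite IHm; ring. Qed.

Lemma sum_nat_nonneg m h : (forall j, (j < m)%nat -> 0 <= h j) -> 0 <= sum_nat m h.
Proof.
  intros H. apply Rle_trans with (sum_nat m (fun _ => 0)); [|apply sum_nat_le; auto].
  clear H; induction m; simpl; lra.
Qed.

Lemma sum_nat_ge_term m h j :
  (forall j, (j < m)%nat -> 0 <= h j) -> (j < m)%nat -> h j <= sum_nat m h.
Proof.
  induction m; simpl; intros H Hj; [lia|].
  assert (0 <= sum_nat m h) by (apply sum_nat_nonneg; auto).
  assert (0 <= h m) by auto.
  destruct (Nat.eq_dec j m) as [->|Hne]; [lra|].
  assert (h j <= sum_nat m h) by (apply IHm; auto; lia). lra.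
Qed.

Fixpoint sum_words (n : nat) (g : list bool -> R) : R :=
  match n with
  | O => g []
  | S n => sum_words n (fun x => g (false :: x)) + sum_words n (fun x => g (true :: x))
  end.

Lemma sum_words_le n : forall f g,
  (forall x, length x = n -> f x <= g x) -> sum_words n f <= sum_words n g.
Proof.
  induction n; simpl; intros f g H; [apply H; reflexivity|].
  apply Rplus_le_compat; apply IHn; intros x Hx; apply H; simpl; lia.
Qed.

Lemma sum_words_ext n f g :
  (forall x, length x = n -> f x = g x) -> sum_words n f = sum_words n g.
Proof. intros H; apply Rle_antisym; apply sum_words_le; intros x Hx; rewrite H; auto; lra. Qed.

Lemma sum_words_plus n : forall f g,
  sum_words n (fun x => f x + g x) = sum_words n f + sum_words n g.
Proof. induction n; simpl; intros; [ring|]. rewrite !IHn; ring. Qed.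

Lemma sum_words_scal n : forall k f, sum_words n (fun x => k * f x) = k * sum_words n f.
Proof. induction n; simpl; intros; [ring|]. rewrite !IHn; ring. Qed.

Lemma sum_words_const n : forall k, sum_words n (fun _ => k) = k * 2 ^ n.
Proof. induction n; simpl; intros; [ring|]. rewrite !IHn; ring. Qed.

Lemma sum_words_nonneg n f : (forall x, 0 <= f x) -> 0 <= sum_words n f.
Proof.
  intros H. rewrite <- (Rmult_0_l (2 ^ n)), <- sum_words_const. apply sum_words_le; auto.
Qed.

Lemma sum_words_app a : forall b g,
  sum_words (a + b) g = sum_words a (fun z => sum_words b (fun y => g (z ++ y))).
Proof. induction a; simpl; intros; [reflexivity|]. rewrite !IHa. reflexivity. Qed.

Lemma sum_words_comm n : forall m g,
  sum_words n (fun x => sum_words m (fun y => g x y))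
  = sum_words m (fun y => sum_words n (fun x => g x y)).
Proof.
  induction n; simpl; intros; [reflexivity|].
  rewrite (IHn m (fun x y => g (false :: x) y)), (IHn m (fun x y => g (true :: x) y)).
  rewrite <- sum_words_plus. reflexivity.
Qed.

Lemma sum_words_sum_nat n m : forall h,
  sum_words n (fun x => sum_nat m (fun j => h j x)) = sum_nat m (fun j => sum_words n (h j)).
Proof.
  induction m; simpl; intros.
  - rewrite sum_words_const. ring.
  - rewrite sum_words_plus, IHm. reflexivity.
Qed.

Lemma sum_words_ge_term n : forall g p,
  (forall y, 0 <= g y) -> length p = n -> g p <= sum_words n g.
Proof.
  induction n; intros g [|b p] Hg Hp; simpl in *; try lia; [lra|].
  assert (0 <= sum_words n (fun x => g (false :: x))) by (apply sum_words_nonneg; auto).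
  assert (0 <= sum_words n (fun x => g (true :: x))) by (apply sum_words_nonneg; auto).
  destruct b.
  - assert (g (true :: p) <= sum_words n (fun x => g (true :: x)))
      by (apply (IHn (fun x => g (true :: x))); auto). lra.
  - assert (g (false :: p) <= sum_words n (fun x => g (false :: x)))
      by (apply (IHn (fun x => g (false :: x))); auto). lra.
Qed.

Definition ind (P : Prop) : R := if excluded_middle_informative P then 1 else 0.

Lemma ind_true (P : Prop) : P -> ind P = 1.
Proof. unfold ind; destruct excluded_middle_informative; tauto. Qed.

Lemma ind_false (P : Prop) : ~ P -> ind P = 0.
Proof. unfold ind; destruct excluded_middle_informative; tauto. Qed.

Lemma ind_bounds (P : Prop) : 0 <= ind P <= 1.
Proof. unfold ind; destruct excluded_middle_informative; lra. Qed.

Lemma sum_words_ind_unique n : forall P : list bool -> Prop,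
  (forall x y, P x -> P y -> x = y) -> sum_words n (fun x => ind (P x)) <= 1.
Proof.
  induction n; simpl; intros P HP; [apply ind_bounds|].
  assert (IH : forall b, sum_words n (fun x => ind (P (b :: x))) <= 1).
  { intros b. apply (IHn (fun x => P (b :: x))). intros x y Hx Hy.
    injection (HP _ _ Hx Hy); auto. }
  assert (Hnone : forall b, ~ (exists x, P (b :: x)) -> sum_words n (fun x => ind (P (b :: x))) = 0).
  { intros b Hno. rewrite <- (Rmult_0_l (2 ^ n)), <- sum_words_const.
    apply sum_words_ext; intros y _. apply ind_false; eauto. }
  destruct (classic (exists x, P (false :: x))) as [[x Hx]|Hno].
  - rewrite (Hnone true); [specialize (IH false); lra|].
    intros [y Hy]. discriminate (HP _ _ Hx Hy).
  - rewrite (Hnone false Hno). specialize (IH true). lra.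
Qed.

Section AvoidingCount.
Variable F : list bool -> Prop.
Hypothesis F_nil : ~ F [].

Lemma avoids_nil : avoids F [].
Proof. intros [|? ?] [|? ?] c E; try discriminate. exact F_nil. Qed.

Lemma avoids_snoc_forbidden_suffix w t :
  avoids F w -> ~ avoids F (w ++ [t]) ->
  exists a b, w ++ [t] = a ++ b /\ F b /\ avoids F a.
Proof.
  intros Aw Awt. apply NNPP; intros Hno. apply Awt. intros a b c E Fb.
  destruct c as [|t' c' _] using rev_ind.
  - apply Hno. exists a, b. rewrite app_nil_r in E. split; [exact E | split; [exact Fb|]].
    destruct b as [|t' b' _] using rev_ind; [contradiction|].
    rewrite app_assoc in E. apply app_inj_tail in E as [E _].
    subst w. eapply avoids_prefix; eauto.
  - rewrite !app_assoc in E. apply app_inj_tail in E as [E _].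
    apply (Aw a b c'); auto. subst w. rewrite !app_assoc. reflexivity.
Qed.

(* For [x] of length [n+1]: the suffix of length [j+1] is forbidden and the rest avoids [F]. *)
Definition ends_forbidden (n j : nat) (x : list bool) : R :=
  ind (F (skipn (n - j) x)) * ind (avoids F (firstn (n - j) x)).

Lemma ends_forbidden_nonneg n j x : 0 <= ends_forbidden n j x.
Proof. apply Rmult_le_pos; apply ind_bounds. Qed.

Lemma ind_avoids_snoc n w t : length w = n ->
  ind (avoids F w)
  <= ind (avoids F (w ++ [t])) + sum_nat (S n) (fun j => ends_forbidden n j (w ++ [t])).
Proof.
  intros Hw.
  assert (0 <= sum_nat (S n) (fun j => ends_forbidden n j (w ++ [t])))
    by (apply sum_nat_nonneg; intros; apply ends_forbidden_nonneg).
  pose proof (ind_bounds (avoids F (w ++ [t]))).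
  destruct (classic (avoids F w)) as [Aw|Aw]; [|rewrite (ind_false _ Aw); lra].
  destruct (classic (avoids F (w ++ [t]))) as [Awt|Awt];
    [rewrite (ind_true _ Awt), (ind_true _ Aw); lra|].
  rewrite (ind_true _ Aw), (ind_false _ Awt).
  destruct (avoids_snoc_forbidden_suffix w t Aw Awt) as (a & b & E & Fb & Aa).
  destruct b as [|b0 b]; [contradiction|].
  assert (Hlen : length (w ++ [t]) = length (a ++ b0 :: b)) by (rewrite E; reflexivity).
  rewrite !length_app in Hlen. simpl in Hlen.
  assert (Hj : ends_forbidden n (length b) (w ++ [t]) = 1).
  { unfold ends_forbidden. replace (n - length b)%nat with (length a) by lia.
    rewrite E, skipn_app, firstn_app, Nat.sub_diag, skipn_all, firstn_all, app_nil_r.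
    simpl. rewrite (ind_true _ Fb), (ind_true _ Aa). ring. }
  rewrite <- Hj at 1. rewrite Rplus_0_l.
  apply (sum_nat_ge_term (S n) (fun j => ends_forbidden n j (w ++ [t])));
    [intros; apply ends_forbidden_nonneg | lia].
Qed.

Definition n_avoiding (n : nat) : R := sum_words n (fun x => ind (avoids F x)).
Definition n_forbidden (j : nat) : R := sum_words j (fun x => ind (F x)).

Lemma n_avoiding_0 : n_avoiding 0 = 1.
Proof. apply ind_true, avoids_nil. Qed.

Lemma n_forbidden_nonneg j : 0 <= n_forbidden j.
Proof. apply sum_words_nonneg; intros; apply ind_bounds. Qed.

Lemma sum_ends_forbidden n j : (j <= n)%nat ->
  sum_words (S n) (ends_forbidden n j) = n_forbidden (S j) * n_avoiding (n - j).
Proof.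
  intros Hj. replace (S n) with ((n - j) + S j)%nat by lia. rewrite sum_words_app.
  unfold n_avoiding. rewrite <- sum_words_scal. apply sum_words_ext; intros a Ha.
  unfold n_forbidden. rewrite Rmult_comm, <- sum_words_scal. apply sum_words_ext; intros b _.
  unfold ends_forbidden. rewrite <- Ha.
  rewrite skipn_app, firstn_app, Nat.sub_diag, skipn_all, firstn_all, app_nil_r.
  simpl. ring.
Qed.

(* Each avoiding word of length [n] has two one-letter extensions; every extension that
   fails to avoid [F] ends with a forbidden word preceded by an avoiding one. *)
Lemma n_avoiding_recurrence n :
  2 * n_avoiding n
  <= n_avoiding (S n) + sum_nat (S n) (fun j => n_forbidden (S j) * n_avoiding (n - j)).
Proof.
  rewrite <- (sum_nat_ext (S n) (fun j => sum_words (S n) (ends_forbidden n j)))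
    by (intros; apply sum_ends_forbidden; lia).
  rewrite <- sum_words_sum_nat. unfold n_avoiding.
  rewrite <- sum_words_plus, <- sum_words_scal.
  replace (S n) with (n + 1)%nat by lia. rewrite sum_words_app.
  apply sum_words_le; intros w Hw. simpl.
  replace (n + 1)%nat with (S n) by lia.
  pose proof (ind_avoids_snoc n w false Hw). pose proof (ind_avoids_snoc n w true Hw).
  lra.
Qed.

End AvoidingCount.

(* If the forbidden weight stays below [2 beta - 1], each step at least divides the count by
   [beta], so the counts [s (n - j) <= beta ^ j * s n] never collapse to zero. *)
Lemma counting_recurrence_growth (s c : nat -> R) (beta : R) :
  0 < beta -> s O = 1 -> (forall j, 0 <= c j) ->
  (forall n, 2 * s n <= s (S n) + sum_nat (S n) (fun j => c (S j) * s (n - j)%nat)) ->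
  (forall m, sum_nat m (fun j => c (S j) * beta ^ S j) <= 2 * beta - 1) ->
  forall n, 0 < s n /\ forall j, (j <= n)%nat -> s (n - j)%nat <= beta ^ j * s n.
Proof.
  intros Hb H0 Hc Hrec Hsum. induction n as [|n [Hpos IH]].
  - split; [lra|]. intros j Hj. replace j with O by lia. simpl. lra.
  - assert (Hstep : s n / beta <= s (S n)).
    { assert (Hw : sum_nat (S n) (fun j => c (S j) * s (n - j)%nat)
                   <= s n / beta * sum_nat (S n) (fun j => c (S j) * beta ^ S j)).
      { rewrite <- sum_nat_scal. apply sum_nat_le; intros j Hj.
        replace (s n / beta * (c (S j) * beta ^ S j)) with (c (S j) * (beta ^ j * s n))
          by (simpl; field; lra).
        apply Rmult_le_compat_l; auto. apply IH; lia. }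
      assert (s n / beta * sum_nat (S n) (fun j => c (S j) * beta ^ S j)
              <= s n / beta * (2 * beta - 1))
        by (apply Rmult_le_compat_l; [apply Rle_mult_inv_pos; lra | apply Hsum]).
      assert (s n / beta * (2 * beta - 1) = 2 * s n - s n / beta) by (field; lra).
      pose proof (Hrec n). lra. }
    assert (0 < s n / beta) by (apply Rdiv_lt_0_compat; lra).
    split; [lra|].
    intros [|j] Hj; [simpl; lra|].
    assert (s n <= beta * s (S n)).
    { apply (Rmult_le_compat_l beta) in Hstep; [|lra].
      replace (beta * (s n / beta)) with (s n) in Hstep by (field; lra). exact Hstep. }
    apply Rle_trans with (beta ^ j * s n); [apply IH; lia|].
    replace (beta ^ S j * s (S n)) with (beta ^ j * (beta * s (S n))) by (simpl; ring).
    apply Rmult_le_compat_l; [apply pow_le; lra | assumption].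
Qed.

Lemma avoiding_words_exist (F : list bool -> Prop) (beta : R) :
  ~ F [] -> 0 < beta ->
  (forall m, sum_nat m (fun j => n_forbidden F (S j) * beta ^ S j) <= 2 * beta - 1) ->
  forall n, exists x, length x = n /\ avoids F x.
Proof.
  intros F_nil Hbeta Hweight n.
  destruct (counting_recurrence_growth (n_avoiding F) (n_forbidden F) beta Hbeta
    (n_avoiding_0 F F_nil) (n_forbidden_nonneg F) (n_avoiding_recurrence F F_nil) Hweight n)
    as [Hpos _].
  apply NNPP; intros Hno. unfold n_avoiding in Hpos.
  rewrite (sum_words_ext n _ (fun _ => 0)), sum_words_const in Hpos; [lra|].
  intros x Hx. apply ind_false. intros Ax. apply Hno; eauto.
Qed.

Lemma sum_pow2_below (X : R) m : 0 <= X ->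
  sum_nat m (fun l => ind (INR l < X) * 2 ^ l) <= 2 * Rpower 2 X.
Proof.
  intros HX.
  assert (Hfull : forall m, sum_nat m (fun l => ind (INR l < X) * 2 ^ l) <= 2 ^ m - 1).
  { induction m0; simpl; [lra|]. pose proof (ind_bounds (INR m0 < X)).
    assert (0 < 2 ^ m0) by (apply pow_lt; lra). nra. }
  assert (0 < Rpower 2 X) by (unfold Rpower; apply exp_pos).
  induction m; simpl; [lra|].
  destruct (classic (INR m < X)) as [Hm|Hm]; [|rewrite (ind_false _ Hm); lra].
  rewrite (ind_true _ Hm). specialize (Hfull m).
  assert (2 ^ m < Rpower 2 X) by (rewrite <- Rpower_pow by lra; apply Rpower_lt; lra).
  lra.
Qed.

Lemma sum_geometric_tail (r : R) (N : nat) : 0 <= r < 1 -> (1 <= N)%nat -> forall n,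
  (1 - r) * sum_nat n (fun j => ind (N <= S j)%nat * r ^ S j) <= r ^ N.
Proof.
  intros Hr HN n.
  assert (Hinv : (1 - r) * sum_nat n (fun j => ind (N <= S j)%nat * r ^ S j)
                 + r ^ Nat.max N (S n) <= r ^ N).
  { induction n as [|n IH]; cbn [sum_nat].
    - replace (Nat.max N 1) with N by lia. lra.
    - destruct (le_lt_dec N (S n)) as [H|H].
      + rewrite (ind_true _ H). rewrite Nat.max_r in IH by lia. rewrite Nat.max_r by lia.
        replace (r ^ S (S n)) with (r * r ^ S n) by (simpl; ring). nra.
      + rewrite ind_false by lia. rewrite Nat.max_l in IH by lia. rewrite Nat.max_l by lia.
        lra. }
  assert (0 <= r ^ Nat.max N (S n)) by (apply pow_le; lra). lra.
Qed.

Section Compressible.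
Variable U : machine.
Hypothesis U_functional : forall p x y, U p x -> U p y -> x = y.
Variable g : R.
Hypothesis g_bounds : 0 < g < 1.
Variable N : nat.

Definition compressible (x : list bool) : Prop :=
  (N <= length x)%nat /\ exists p, U p x /\ INR (length p) < g * INR (length x).

Lemma compressible_nil : ~ compressible [].
Proof. intros [_ [p [_ Hp]]]. simpl in Hp. pose proof (pos_INR (length p)). lra. Qed.

Lemma n_compressible_short j : (j < N)%nat -> n_forbidden compressible j = 0.
Proof.
  intros Hj. unfold n_forbidden. rewrite <- (Rmult_0_l (2 ^ j)), <- sum_words_const.
  apply sum_words_ext; intros x Hx. apply ind_false. intros [H _]. lia.
Qed.

(* A compressible word is the output of one of the fewer than [2 * 2 ^ (g j)] programs
   of length below [g j], and distinct words have distinct programs. *)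
Lemma n_compressible_bound j : n_forbidden compressible j <= 2 * Rpower 2 (g * INR j).
Proof.
  pose proof (pos_INR j) as Hjpos.
  set (programs l x := sum_words l (fun p => ind (U p x))).
  apply Rle_trans with
    (sum_words j (fun x => sum_nat j (fun l => ind (INR l < g * INR j) * programs l x))).
  { unfold n_forbidden. apply sum_words_le. intros x Hx.
    destruct (classic (compressible x)) as [Hc|Hc];
      [|rewrite (ind_false _ Hc); apply sum_nat_nonneg; intros;
        apply Rmult_le_pos; [apply ind_bounds | apply sum_words_nonneg; intros; apply ind_bounds]].
    rewrite (ind_true _ Hc). destruct Hc as [_ (p & Up & Hp)]. rewrite Hx in Hp.
    assert (Hl : (length p < j)%nat) by (apply INR_lt; pose proof (pos_INR (length p)); nra).
    eapply Rle_trans; [|apply (sum_nat_ge_term j _ (length p)); [|exact Hl]];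
      [|intros; apply Rmult_le_pos;
        [apply ind_bounds | apply sum_words_nonneg; intros; apply ind_bounds]].
    cbv beta. rewrite (ind_true _ Hp), Rmult_1_l, <- (ind_true _ Up).
    apply (sum_words_ge_term _ (fun p => ind (U p x))); auto. intros; apply ind_bounds. }
  rewrite sum_words_sum_nat.
  eapply Rle_trans; [|apply (sum_pow2_below (g * INR j)); nra].
  apply sum_nat_le; intros l Hl. rewrite sum_words_scal.
  apply Rmult_le_compat_l; [apply ind_bounds|].
  unfold programs. rewrite sum_words_comm, <- (Rmult_1_l (2 ^ l)), <- sum_words_const.
  apply sum_words_le; intros p _. apply sum_words_ind_unique. intros; eapply U_functional; eauto.
Qed.

End Compressible.

(* With [beta = 2 ^ (-(1+g)/2)] the weighted forbidden counts are dominated by the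
   geometric series of ratio [2 ^ g * beta = 2 ^ ((g-1)/2) < 1], whose tail beyond a
   large enough [N] is below [2 beta - 1 > 0]. *)
Lemma compressible_weight_small (U : machine) (g : R) :
  (forall p x y, U p x -> U p y -> x = y) -> 0 < g < 1 ->
  exists beta N, 0 < beta /\ forall m,
    sum_nat m (fun j => n_forbidden (compressible U g N) (S j) * beta ^ S j) <= 2 * beta - 1.
Proof.
  intros U_functional Hg.
  set (beta := Rpower 2 (- (1 + g) / 2)). set (r := Rpower 2 ((g - 1) / 2)).
  assert (Hbeta : 1 / 2 < beta).
  { replace (1 / 2) with (Rpower 2 (- (1))) by (rewrite Rpower_Ropp, Rpower_1; lra).
    apply Rpower_lt; lra. }
  assert (Hr : 0 < r < 1).
  { split; [unfold r, Rpower; apply exp_pos|].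
    rewrite <- (Rpower_O 2) by lra. apply Rpower_lt; lra. }
  assert (Hratio : Rpower 2 g * beta = r) by (unfold beta, r; rewrite <- Rpower_plus; f_equal; field).
  set (eps := (2 * beta - 1) * (1 - r) / 2).
  assert (Heps : 0 < eps) by (unfold eps; apply Rdiv_lt_0_compat; nra).
  destruct (pow_lt_1_zero r ltac:(rewrite Rabs_right; lra) eps Heps) as [N0 HN0].
  set (N := S N0). exists beta, N. split; [lra|]. intros m.
  assert (HrN : r ^ N < eps).
  { specialize (HN0 N ltac:(unfold N; lia)). rewrite Rabs_right in HN0; [exact HN0|].
    apply Rle_ge, pow_le; lra. }
  assert (Hterm : forall j, n_forbidden (compressible U g N) (S j) * beta ^ S j
                            <= 2 * (ind (N <= S j)%nat * r ^ S j)).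
  { intros j. assert (0 < beta ^ S j) by (apply pow_lt; lra).
    destruct (le_lt_dec N (S j)) as [Hj|Hj].
    - rewrite (ind_true _ Hj), Rmult_1_l, <- Hratio, Rpow_mult_distr.
      pose proof (n_compressible_bound U U_functional g Hg N (S j)) as Hc.
      rewrite <- Rpower_mult, Rpower_pow in Hc by (unfold Rpower; apply exp_pos). nra.
    - rewrite n_compressible_short, ind_false by lia. lra. }
  apply Rle_trans with (2 * sum_nat m (fun j => ind (N <= S j)%nat * r ^ S j));
    [rewrite <- sum_nat_scal; apply sum_nat_le; auto|].
  pose proof (sum_geometric_tail r N ltac:(lra) ltac:(unfold N; lia) m).
  assert (Htail : (1 - r) * (2 * sum_nat m (fun j => ind (N <= S j)%nat * r ^ S j))
                  <= (1 - r) * (2 * beta - 1)) by (unfold eps in HrN; lra).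
  apply Rmult_le_reg_l with (1 - r); lra.
Qed.

Theorem mainTheorem2 :
  forall U : machine, optimal_prefix_machine U ->
  forall gamma : R, gamma < 1 ->
  exists (omega : nat -> bool) (N : nat),
    forall i n : nat, (N <= n)%nat ->
      forall k : nat, is_K U (substring omega i n) k ->
        gamma * INR n <= INR k.
Proof.
  intros U [[U_computable _] _] gamma Hgamma.
  pose proof (computable_functional U U_computable) as U_functional.
  set (g := Rmax gamma (1 / 2)).
  assert (Hg : 0 < g < 1).
  { split; [apply Rlt_le_trans with (1 / 2); [lra | apply Rmax_r] | apply Rmax_lub_lt; lra]. }
  destruct (compressible_weight_small U g U_functional Hg) as (beta & N & Hbeta & Hweight).
  destruct (avoiding_sequence (compressible U g N)
    (avoiding_words_exist _ beta (compressible_nil U g N) Hbeta Hweight)) as [omega Homega].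
  exists omega, N. intros i n Hn k [[p [Up Hp]] _].
  apply Rnot_lt_le. intros Hlt. apply (Homega i n).
  assert (Hlen : length (substring omega i n) = n)
    by (unfold substring; rewrite length_map, length_seq; reflexivity).
  split; [lia|]. exists p. split; [exact Up|].
  rewrite Hlen, Hp. assert (gamma <= g) by apply Rmax_l. pose proof (pos_INR n). nra.
Qed.
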